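(* The elements $x^{\mathbf a_1}-\lambda x^{\mathbf a_0},\dots,x^{\mathbf a_m}-\lambda x^{\mathbf a_0}$ form a regular sequence on $S'$.
   Context: Let $A=\{\mathbf a_1,\dots,\mathbf a_m\}\subseteq\mathbb Z^n$ be linearly independent over $\mathbb R$, $\mathbf a_0\in\mathbb Z^n$, and $\ell_0,\dots,\ell_m$ positive integers with gcd $1$, $\ell_0\mathbf a_0=\sum_{j=1}^m\ell_j\mathbf a_j$, $\ell_0=\sum_{j=1}^m\ell_j$. Let $V$ be the real span of $A$, $V_{\mathbb Z}=V\cap\mathbb Z^n$, $C(A)$ the real cone generated by $A$, $M=V_{\mathbb Z}\cap C(A)$, and $S'$ the $\mathbb C(\lambda)$-subalgebra of $\mathbb C(\lambda)[x_1^{\pm1},\dots,x_n^{\pm1}]$ spanned by $\{x^u:u\in M\}$, $\lambda$ an indeterminate. *)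

From HB Require Import structures.
From mathcomp Require Import all_boot all_order all_algebra.
From mathcomp Require Import reals complex fraction.
From mathcomp.multinomials Require Import freeg.
Set Implicit Arguments. Unset Strict Implicit. Unset Printing Implicit Defensive.
Import GRing.Theory Num.Theory.
Local Open Scope ring_scope.

(* The base field C(lambda): fractions of polynomials over C = R[i],
   where R : realType is the field of real numbers. *)
Definition Clam (R : realType) : fieldType := {fraction {poly R[i]}}.

Definition lam (R : realType) : Clam R := @FracField.tofrac {poly R[i]} 'X.

(* Laurent polynomials  C(lambda)[x_1^{+-1},...,x_n^{+-1}]  = group algebra of
   Z^n: finitely supported formal combinations  sum_u c_u x^u, u in Z^n. *)
Definition laurent (R : realType) (n : nat) := {freeg 'rV[int]_n / Clam R}.

Definition xmon (R : realType) (n : nat) (u : 'rV[int]_n) : laurent R n := << u >>.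

Definition lmul (R : realType) (n : nat) (f g : laurent R n) : laurent R n :=
  \sum_(u <- dom f) \sum_(v <- dom g) << coeff u f * coeff v g *g (u + v) >>.

Definition lone (R : realType) (n : nat) : laurent R n := xmon R (0 : 'rV[int]_n).

Definition rvR (R : realType) (n : nat) (u : 'rV[int]_n) : 'rV[R]_n :=
  map_mx (fun z : int => z%:~R) u.

(* M = V_Z \cap C(A): integer vectors that are nonnegative real combinations
   of a_1..a_m (such vectors automatically lie in V = span_R A). *)
Definition inM (R : realType) (n m : nat) (a : 'I_m -> 'rV[int]_n)
  (u : 'rV[int]_n) : Prop :=
  exists c : 'I_m -> R, (forall j, 0 <= c j) /\
    rvR R u = \sum_(j < m) c j *: rvR R (a j).

(* S' : the C(lambda)-span of {x^u : u in M}, i.e. Laurent polynomials all of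
   whose exponents lie in M. *)
Definition inS' (R : realType) (n m : nat) (a : 'I_m -> 'rV[int]_n)
  (f : laurent R n) : Prop :=
  forall u, u \in dom f -> inM R a u.

Definition in_ideal (R : realType) (n : nat) (P : laurent R n -> Prop)
  (fs : seq (laurent R n)) (h : laurent R n) : Prop :=
  exists gs : seq (laurent R n), size gs = size fs /\
    (forall g, g \in gs -> P g) /\
    h = \sum_(i < size fs) lmul gs`_i fs`_i.

Definition regular_seq (R : realType) (n : nat) (P : laurent R n -> Prop)
  (fs : seq (laurent R n)) : Prop :=
  [/\ forall f, f \in fs -> P f,
      forall i, (i < size fs)%N -> forall g, P g ->
         in_ideal P (take i fs) (lmul g fs`_i) -> in_ideal P (take i fs) g
    & ~ in_ideal P fs (lone R n)].

From HB Require Import structures.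
From mathcomp Require Import all_boot all_order all_algebra.
From mathcomp Require Import reals complex fraction.
From mathcomp.multinomials Require Import freeg.
From mathcomp Require Import zify lra.
From Stdlib Require Import ClassicalEpsilon.
Import Order.TTheory GRing.Theory Num.Theory.
Local Open Scope ring_scope.
Set Implicit Arguments. Unset Strict Implicit. Unset Printing Implicit Defensive.

(* In the coordinates y_1, ..., y_m of V with respect to the basis a_1, ..., a_m,
   M is the set of lattice points of V with y >= 0, and a_0 has coordinates
   p_j = l_j / l_0 > 0 summing to 1.  Modulo I_i = (f_j : j < i), where
   f_j = x^{a_j} - lambda x^{a_0}, the relations x^{v + a_j} = lambda x^{v + a_0}
   (j < i) rewrite each monomial x^u, u in M, into lambda^S x^{N(u)}, where the
   coordinates y_j, j < i, of N(u) lie in [0, 1); the number S of steps is the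
   least fixed point of S |-> sum_{j < i} floor (y_j + S p_j), which exists
   because sum_{j < i} p_j < 1.  The resulting C(lambda)-linear map Phi_i
   vanishes on I_i, and x^u - Phi_i(x^u) lies in I_i.  If g f_i lies in I_i,
   write Phi_i(g) = sum_w c_w x^w; then
   0 = Phi_i(g f_i) = sum_w c_w (x^{w + a_i} - lambda Phi_i(x^{w + a_0})),
   and comparing the lowest powers of lambda in the c_w gives Phi_i(g) = 0,
   i.e. g lies in I_i.  Finally 1 is not in I_m, because every element of I_m
   has constant term 0: u + a_j and u + a_0 have a positive coordinate. *)

Section FreegLift.
Variables (K : ringType) (T : choiceType).
Implicit Types (D : {freeg T / K}) (x : T) (c : K).

Lemma freegUZ c x : << c *g x >> = c *: << x >> :> {freeg T / K}.
Proof. by apply/eqP/freeg_eqP => y; rewrite coeffZ !coeffU mul1r. Qed.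

Definition supported (Q : T -> Prop) D := forall x, x \in dom D -> Q x.

Section Supported.
Variable Q : T -> Prop.

Lemma supported0 : supported Q 0.
Proof. by move=> x; rewrite dom0. Qed.

Lemma supportedU x : Q x -> supported Q << x >>.
Proof. by move=> Qx y; rewrite domU1 inE => /eqP ->. Qed.

Lemma supportedD D1 D2 : supported Q D1 -> supported Q D2 -> supported Q (D1 + D2).
Proof. by move=> Q1 Q2 x /domD_subset; rewrite mem_cat => /orP[/Q1|/Q2]. Qed.

Lemma supportedZ c D : supported Q D -> supported Q (c *: D).
Proof. by move=> QD x /domZ_subset /QD. Qed.

Lemma supportedB D1 D2 : supported Q D1 -> supported Q D2 -> supported Q (D1 - D2).
Proof. by move=> Q1 Q2; rewrite -scaleN1r; apply/supportedD/supportedZ. Qed.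

End Supported.

Variable M : lmodType K.
Implicit Types (f h : T -> M).

HB.instance Definition _ f :=
  GRing.isZmodMorphism.Build {freeg T / K} M (fglift f) (lift_is_additive f).

Lemma fgliftE f D : fglift f D = \sum_(x <- dom D) coeff x D *: f x.
Proof.
by rewrite -{1}(freeg_sumE D) raddf_sum; apply: eq_bigr => x _; exact: liftU.
Qed.

Lemma fgliftB f : {morph fglift f : D1 D2 / D1 - D2}.
Proof. exact: raddfB. Qed.

Lemma fglift_sum f (I : Type) (r : seq I) (P : pred I) (F : I -> {freeg T / K}) :
  fglift f (\sum_(i <- r | P i) F i) = \sum_(i <- r | P i) fglift f (F i).
Proof. exact: raddf_sum. Qed.

Lemma fgliftZ f c D : fglift f (c *: D) = c *: fglift f D.
Proof.
rewrite [in RHS]fgliftE scaler_sumr.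
have -> : c *: D = \sum_(x <- dom D) << c * coeff x D *g x >> by [].
by rewrite fglift_sum; apply: eq_bigr => x _; rewrite scalerA; exact: liftU.
Qed.

Lemma fgliftU f x : fglift f << x >> = f x.
Proof. by rewrite liftU scale1r. Qed.

Lemma eq_in_fglift f h D : {in dom D, f =1 h} -> fglift f D = fglift h D.
Proof. by move=> fh; rewrite !fgliftE; apply: eq_big_seq => x /fh ->. Qed.

Lemma fglift_funB f h D :
  fglift (fun x => f x - h x) D = fglift f D - fglift h D.
Proof. by rewrite !fgliftE -sumrB; apply: eq_bigr => x _; rewrite scalerBr. Qed.

End FreegLift.

Section FreegEndo.
Variables (K : ringType) (T : choiceType).
Implicit Types (D : {freeg T / K}) (F G : T -> {freeg T / K}).

Lemma fglift_id D : fglift (fun x => << x >>) D = D.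
Proof.
by rewrite -[RHS]freeg_sumE fgliftE; apply: eq_bigr => x _; rewrite freegUZ.
Qed.

Lemma fglift_comp F G D : fglift F (fglift G D) = fglift (fun x => fglift F (G x)) D.
Proof.
rewrite [fglift G D]fgliftE fglift_sum [RHS]fgliftE.
by apply: eq_bigr => x _; rewrite fgliftZ.
Qed.

Lemma coeff_fglift G D y :
  coeff y (fglift G D) = \sum_(x <- dom D) coeff x D * coeff y (G x).
Proof. by rewrite fgliftE raddf_sum; apply: eq_bigr => x _; exact: coeffZ. Qed.

End FreegEndo.

Section FreegFraction.
Variables (D : idomainType) (T : choiceType).
Local Notation tf := (@FracField.tofrac D).
Implicit Types (g : {freeg T / {fraction D}}) (q : D).

Lemma fraction_clear_denom (x : {fraction D}) :
  exists2 d, d != 0 & exists q, x * tf d = tf q.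
Proof.
elim/quotW: x => r; exists (\d_r); first exact: denom_ratioP.
exists (\n_r); unlock FracField.tofrac; rewrite -[LHS]FracField.pi_mul.
apply/eqmodP; rewrite /= FracField.equivfE /FracField.mulf /=.
by rewrite !numden_Ratio ?(oner_neq0, mulf_neq0, denom_ratioP) // !mulr1 mulrC.
Qed.

Lemma freeg_clear_denom g :
  exists2 d, d != 0 & forall w, exists q, tf d * coeff w g = tf q.
Proof.
suff [d dnz dg] : exists2 d, d != 0 &
    forall w, w \in dom g -> exists q, tf d * coeff w g = tf q.
  exists d => // w; have [/dg //|/coeff_outdom ->] := boolP (w \in dom g).
  by exists 0; rewrite mulr0 tofrac0.
elim: (dom g) => [|w s [d dnz dg]]; first by exists 1; rewrite ?oner_eq0.
have [e enz [q wq]] := fraction_clear_denom (coeff w g).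
exists (d * e); first by rewrite mulf_neq0.
move=> v; rewrite inE => /predU1P[->|/dg[r vr]].
  by exists (d * q); rewrite !tofracM -mulrA [tf e * _]mulrC wq.
by exists (e * r); rewrite !tofracM mulrAC vr mulrC.
Qed.

Lemma tofrac_choice (c : T -> {fraction D}) :
  (forall w, exists q, c w = tf q) -> exists q : T -> D, forall w, c w = tf (q w).
Proof.
move=> c_poly; have c_poly' w : exists q, c w == tf q.
  by have [q ->] := c_poly w; exists q.
by exists (fun w => xchoose (c_poly' w)) => w; apply/eqP/(xchooseP (c_poly' w)).
Qed.

End FreegFraction.

Section FractionCoefficients.
Variables (F : idomainType) (T : choiceType).
Local Notation tf := (@FracField.tofrac {poly F}).
Local Notation LF := {freeg T / {fraction {poly F}}}.
Implicit Types (g : LF) (q : {poly F}).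

Lemma min_nonzero_coef (s : seq T) (q : T -> {poly F}) : has (fun w => q w != 0) s ->
  exists2 k, exists2 w, w \in s & (q w)`_k != 0
    & forall w j, w \in s -> (j < k)%N -> (q w)`_j = 0.
Proof.
case/hasP => w0 w0s q0; have ex_k : exists k, has (fun w => (q w)`_k != 0) s.
  by exists (size (q w0)).-1; apply/hasP; exists w0; rewrite // -lead_coefE lead_coef_eq0.
case: (ex_minnP ex_k) => k /hasP[w ws qk] kmin; exists k; first by exists w.
move=> w' j w's jk; apply/eqP/negPn/negP => qj.
have /kmin : has (fun w => (q w)`_j != 0) s by apply/hasP; exists w'.
by rewrite leqNgt jk.
Qed.

Lemma coefM_lt (p r : {poly F}) k j :
  (forall i, (i < k)%N -> p`_i = 0) -> (j < k)%N -> (p * r)`_j = 0.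
Proof.
move=> pk jk; rewrite coefM big1 // => t _; rewrite pk ?mul0r //.
by apply: leq_ltn_trans jk; rewrite -ltnS.
Qed.

Section PolyCoefficients.
Variables (s : T -> T) (H : T -> LF).
Hypotheses (s_inj : injective s) (H_poly : forall w t, exists q, coeff t (H w) = tf q).

Lemma fglift_sub_X_eq0_poly g : (forall w, exists q, coeff w g = tf q) ->
  fglift (fun w => << s w >> - tf 'X *: H w) g = 0 -> g = 0.
Proof.
move=> /tofrac_choice[q qE] g0; apply/eqP/negPn/negP => gnz.
have /min_nonzero_coef[k [ws ws_g qk] kmin] : has (fun w => q w != 0) (dom g).
  case eg: (dom g) gnz => [|w s']; first by rewrite -dom_eq0 eg.
  move=> _; apply/hasP; exists w; first exact: mem_head.
  by rewrite -tofrac_eq0 -qE -mem_dom eg mem_head.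
have [r rE] := tofrac_choice (fun w => H_poly w (s ws)).
(* The coefficient of << s ws >> in the equation has X^k-coefficient (q ws)`_k,
   since the other terms carry an extra factor 'X. *)
pose Q := \sum_(w <- dom g) q w * ((w == ws)%:R - 'X * r w).
have QE : coeff (s ws) (fglift (fun w => << s w >> - tf 'X *: H w) g) = tf Q.
  rewrite coeff_fglift rmorph_sum; apply: eq_bigr => w _.
  rewrite coeffB coeffU mul1r (inj_eq s_inj) coeffZ rE qE.
  by rewrite rmorphM rmorphB rmorphM rmorph_nat.
have Q0 : Q = 0 by apply/eqP; rewrite -tofrac_eq0 -QE g0 coeff0.
have XPk : ('X * \sum_(w <- dom g) q w * r w)`_k = 0.
  rewrite coefXM; case: ifP => // /negbT k_gt0.
  rewrite coef_sum big1_seq // => w /andP[_ w_g].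
  by apply: (@coefM_lt (q w) (r w) k) => [j|]; [exact: kmin | rewrite ltn_predL lt0n].
have Qk : Q`_k = (q ws)`_k.
  have -> : Q = \sum_(w <- dom g) q w * (w == ws)%:R - 'X * \sum_(w <- dom g) q w * r w.
    by rewrite /Q mulr_sumr -sumrB; apply: eq_bigr => w _; rewrite mulrBr mulrCA.
  rewrite coefB XPk subr0 (bigD1_seq ws) ?uniq_dom //= eqxx mulr1.
  by rewrite big1 ?addr0 // => w /negbTE ->; rewrite mulr0.
by move: qk; rewrite -Qk Q0 coef0 eqxx.
Qed.

Lemma fglift_sub_X_eq0 g : fglift (fun w => << s w >> - tf 'X *: H w) g = 0 -> g = 0.
Proof.
move=> g0; have [d dnz dg] := freeg_clear_denom g.
suff /eqP : tf d *: g = 0 by rewrite scaler_eq0 tofrac_eq0 (negbTE dnz) => /eqP.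
apply: fglift_sub_X_eq0_poly => [w|]; first by rewrite coeffZ; exact: dg.
by rewrite fgliftZ g0 scaler0.
Qed.

End PolyCoefficients.
End FractionCoefficients.

Section LeastFixpoint.
Implicit Types (F : nat -> int) (S N : nat).

(* [lfix F] is 0 when F has no fixed point. *)
Definition lfix F : nat :=
  if excluded_middle_informative (exists S, F S == S%:Z) is left ex then ex_minn ex
  else 0%N.

Lemma lfixP F : (exists S, F S = S%:Z) ->
  F (lfix F) = (lfix F)%:Z /\ forall S, F S = S%:Z -> (lfix F <= S)%N.
Proof.
move=> ex; rewrite /lfix; case: excluded_middle_informative => [ex'|[]]; last first.
  by have [S /eqP] := ex; exists S.
by case: ex_minnP => S /eqP FS Smin; split=> // S' /eqP /Smin.
Qed.

Lemma fixpoint_exists F N :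
  0 <= F 0%N -> (forall S, F S <= F S.+1) -> F N < N%:Z -> exists S, F S = S%:Z.
Proof.
move=> F0 F_mono; elim: N => [|N IH] FN; first by move: F0; rewrite leNgt FN.
have [|FN_ge] := ltP (F N) N%:Z; first exact: IH.
by exists N; have := F_mono N; lia.
Qed.

End LeastFixpoint.

Section ReductionCount.
Variables (R : archiRealFieldType) (m : nat) (p : 'I_m -> R).
Hypotheses (p_gt0 : forall k, 0 < p k) (sum_p : \sum_k p k = 1).
Implicit Types (y : 'I_m -> R) (i S : nat) (k : 'I_m).

Definition nonneg y := forall k, 0 <= y k.

(* After S rewriting steps, y has become y - c + S p, where c_k counts the steps
   that subtracted the k-th unit vector.  Keeping y_k - c_k + S p_k in [0, 1)
   forces c_k = red_count y S k, and the steps are consistent when these c_k,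
   k < i, add up to S. *)
Definition red_count y S k : int := Num.floor (y k + S%:R * p k).

Definition red_total i y S : int := \sum_(k < m | (k < i)%N) red_count y S k.

Definition red_steps i y : nat := lfix (red_total i y).

Definition nf_coord i y k : R :=
  y k - (if (k < i)%N then (red_count y (red_steps i y) k)%:~R else 0)
  + (red_steps i y)%:R * p k.

Lemma red_count_ge0 y S k : nonneg y -> 0 <= red_count y S k.
Proof. by move=> y_ge0; rewrite floor_ge0 addr_ge0 // mulr_ge0 // ltW. Qed.

Lemma red_total_ge0 i y S : nonneg y -> 0 <= red_total i y S.
Proof. by move=> y_ge0; apply: sumr_ge0 => k _; exact: red_count_ge0. Qed.

Lemma red_total_mono i y S : red_total i y S <= red_total i y S.+1.
Proof.
apply: ler_sum => k _; apply: le_floor.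
by rewrite lerD2l ler_wpM2r ?ler_nat // ltW.
Qed.

Lemma sum_p_lt1 i : (i < m)%N -> \sum_(k < m | (k < i)%N) p k < 1.
Proof.
move=> im; rewrite -sum_p [X in _ < X](bigID (fun k : 'I_m => (k < i)%N)) /= ltrDl.
rewrite (bigD1 (Ordinal im)) /= ?ltnn // ltr_wpDr // ?p_gt0 //.
by apply: sumr_ge0 => k _; rewrite ltW.
Qed.

Lemma red_total_fixpoint i y : (i < m)%N -> nonneg y ->
  exists S, red_total i y S = S%:Z.
Proof.
move=> im y_ge0.
set s := \sum_(k < m | (k < i)%N) p k; set t := \sum_(k < m | (k < i)%N) y k.
have s_lt1 : 0 < 1 - s by rewrite subr_gt0 sum_p_lt1.
have t_ge0 : 0 <= t by apply: sumr_ge0.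
have total_le S : (red_total i y S)%:~R <= t + S%:R * s.
  rewrite rmorph_sum mulr_sumr -big_split; apply: ler_sum => k _; exact: floor_le.
pose N := Num.bound (t / (1 - s)).
have tN : t < N%:R * (1 - s).
  by rewrite -ltr_pdivrMr // archi_boundP // divr_ge0 // ltW.
apply: (@fixpoint_exists _ N); first exact: red_total_ge0.
  exact: red_total_mono.
rewrite -(ltr_int R); apply: le_lt_trans (total_le N) _ => /=.
by move: tN; rewrite mulrBr mulr1; lra.
Qed.

Lemma red_steps_fixed i y : (i < m)%N -> nonneg y ->
  red_total i y (red_steps i y) = (red_steps i y)%:Z.
Proof. by move=> im y_ge0; case: (lfixP (red_total_fixpoint im y_ge0)). Qed.

Lemma red_steps_min i y S : (i < m)%N -> nonneg y ->
  red_total i y S = S%:Z -> (red_steps i y <= S)%N.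
Proof. by move=> im y_ge0; case: (lfixP (red_total_fixpoint im y_ge0)) => _; apply. Qed.

Section Shift.
Variables (i : nat) (y y1 y0 : 'I_m -> R) (j : 'I_m).
Hypotheses (y1E : forall k, y1 k = y k + (j == k)%:R) (y0E : forall k, y0 k = y k + p k).

Lemma red_count_shift_unit S k : red_count y1 S k = red_count y S k + (j == k)%:R.
Proof.
rewrite /red_count y1E addrAC; case: eqP => _ /=; last by rewrite !addr0.
by rewrite floorDrz ?rpred1 // floor1.
Qed.

Lemma red_count_shift_p S k : red_count y0 S k = red_count y S.+1 k.
Proof.
by rewrite /red_count y0E -addrA -[S.+1]addn1 natrD mulrDl mul1r [p k + _]addrC.
Qed.

Lemma red_total_shift_unit S : (j < i)%N -> red_total i y1 S = red_total i y S + 1.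
Proof.
move=> ji; rewrite /red_total (bigD1 j) //= [in RHS](bigD1 j) //=.
rewrite red_count_shift_unit eqxx.
rewrite (eq_bigr (red_count y S)); first by rewrite addrAC.
move=> k /andP[_ kj].
by rewrite red_count_shift_unit eq_sym (negbTE kj) addr0.
Qed.

Lemma red_total_shift_p S : red_total i y0 S = red_total i y S.+1.
Proof. by rewrite /red_total; apply: eq_bigr => k _; rewrite red_count_shift_p. Qed.

Lemma red_steps_shift : (i < m)%N -> (j < i)%N -> nonneg y ->
  red_steps i y1 = (red_steps i y0).+1.
Proof.
move=> im ji y_ge0.
have y1_ge0 : nonneg y1 by move=> k; rewrite y1E addr_ge0.
have y0_ge0 : nonneg y0 by move=> k; rewrite y0E addr_ge0 // ltW.
have fix1 := red_steps_fixed im y1_ge0; have fix0 := red_steps_fixed im y0_ge0.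
rewrite red_total_shift_unit // in fix1; rewrite red_total_shift_p in fix0.
apply/eqP; rewrite eqn_leq; apply/andP; split.
  by apply: red_steps_min => //; rewrite red_total_shift_unit // fix0; lia.
case: (red_steps i y1) fix1 => [|S] fix1.
  by have := red_total_ge0 i 0 y_ge0; lia.
by apply: red_steps_min => //; rewrite red_total_shift_p; lia.
Qed.

End Shift.

Lemma red_steps_eq0 i y : (i < m)%N -> nonneg y ->
  (forall k : 'I_m, (k < i)%N -> y k < 1) -> red_steps i y = 0%N.
Proof.
move=> im y_ge0 y_lt1; apply/eqP; rewrite -leqn0 red_steps_min //.
rewrite /red_total big1 // => k ki; rewrite /red_count mul0r addr0.
by apply/eqP; rewrite eq_le floor_le0 ?y_lt1 // floor_ge0 y_ge0.
Qed.

Lemma red_steps_gt0 i y : (i < m)%N -> nonneg y -> (0 < red_steps i y)%N ->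
  exists2 k : 'I_m, (k < i)%N & 1 <= y k.
Proof.
move=> im y_ge0 S_gt0.
have [/existsP[k /andP[ki y_ge1]]|/existsPn y_lt1] :=
  boolP [exists k : 'I_m, (k < i)%N && (1 <= y k)]; first by exists k.
by move: S_gt0; rewrite red_steps_eq0 // => k ki; move: (y_lt1 k); rewrite ki -ltNge.
Qed.

Lemma red_count_steps0 i y k : (i < m)%N -> nonneg y -> red_steps i y = 0%N ->
  (k < i)%N -> red_count y 0 k = 0.
Proof.
move=> im y_ge0 S0 ki; have := red_steps_fixed im y_ge0; rewrite S0.
by move/psumr_eq0P => -> // k' _; exact: red_count_ge0.
Qed.

Lemma nf_coord_ge0 i y k : nonneg y -> 0 <= nf_coord i y k.
Proof.
move=> y_ge0; rewrite /nf_coord /red_count; case: ifP => _.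
  by rewrite -addrA [- _ + _]addrC addrA subr_ge0 floor_le.
by rewrite subr0 addr_ge0 // mulr_ge0 // ltW.
Qed.

Lemma nf_coord_lt1 i y k : (k < i)%N -> nf_coord i y k < 1.
Proof.
move=> ki; rewrite /nf_coord /red_count ki -addrA [- _ + _]addrC addrA.
by rewrite ltrBlDl addrC -[1]/(1%:~R) -intrD floorD1_gt.
Qed.

End ReductionCount.

Section LaurentProduct.
Variables (R : realType) (n : nat).
Local Notation E := 'rV[int]_n.
Local Notation L := (laurent R n).
Implicit Types (f g : L) (u v : E).

Lemma lmulE f g : lmul f g = fglift (fun u => fglift (fun v => xmon R (u + v)) g) f.
Proof.
rewrite /lmul fgliftE; apply: eq_bigr => u _; rewrite fgliftE scaler_sumr.
by apply: eq_bigr => v _; rewrite freegUZ scalerA.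
Qed.

Lemma lmul_xmonl u g : lmul (xmon R u) g = fglift (fun v => xmon R (u + v)) g.
Proof. by rewrite lmulE fgliftU. Qed.

Lemma lmul_fgliftl f g : lmul f g = fglift (fun u => lmul (xmon R u) g) f.
Proof. by rewrite lmulE; apply: eq_in_fglift => u _; rewrite lmul_xmonl. Qed.

Lemma lmulDl f1 f2 g : lmul (f1 + f2) g = lmul f1 g + lmul f2 g.
Proof. by rewrite !lmulE raddfD. Qed.

Lemma lmulZl c f g : lmul (c *: f) g = c *: lmul f g.
Proof. by rewrite !lmulE fgliftZ. Qed.

Lemma lmul0l g : lmul 0 g = 0.
Proof. by rewrite lmulE raddf0. Qed.

End LaurentProduct.

Section RealEmbedding.
Variables (R : realType) (n : nat).

Lemma rvR_is_zmod_morphism : zmod_morphism (@rvR R n).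
Proof. by move=> u v; apply/matrixP => i j; rewrite !mxE rmorphB. Qed.

HB.instance Definition _ :=
  GRing.isZmodMorphism.Build 'rV[int]_n 'rV[R]_n (@rvR R n) rvR_is_zmod_morphism.

End RealEmbedding.

Section Coordinates.
Variables (R : realType) (n m : nat) (a : 'I_m -> 'rV[int]_n).
Hypothesis a_free : row_free (\matrix_(j < m) rvR R (a j)).
Local Notation E := 'rV[int]_n.
Local Notation A := (\matrix_(j < m) rvR R (a j)).
Local Notation inM := (inM R a).
Implicit Types (u v : E) (j k : 'I_m).

Definition acoord k u : R := (rvR R u *m pinvmx A) 0 k.

Lemma acoord_is_zmod_morphism k : zmod_morphism (acoord k).
Proof. by move=> u v; rewrite /acoord raddfB mulmxBl !mxE. Qed.

HB.instance Definition _ k :=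
  GRing.isZmodMorphism.Build E R (acoord k) (acoord_is_zmod_morphism k).

Lemma acoordD k : {morph acoord k : u v / u + v}.
Proof. exact: raddfD. Qed.

Lemma acoordB k : {morph acoord k : u v / u - v}.
Proof. exact: raddfB. Qed.

Lemma acoordMn k u N : acoord k (u *+ N) = acoord k u *+ N.
Proof. exact: raddfMn. Qed.

Lemma acoordMz k u z : acoord k (u *~ z) = acoord k u *~ z.
Proof. exact: raddfMz. Qed.

Lemma acoord_sum k (I : Type) (r : seq I) (P : pred I) (F : I -> E) :
  acoord k (\sum_(x <- r | P x) F x) = \sum_(x <- r | P x) acoord k (F x).
Proof. exact: raddf_sum. Qed.

Definition VZ := [pred u : E | (rvR R u <= A)%MS].

Lemma VZ_zmod_closed : zmod_closed VZ.
Proof.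
split=> [|u v]; rewrite !inE; first by rewrite raddf0 sub0mx.
by move=> uV vV; rewrite raddfB addmx_sub // -scaleN1r scalemx_sub.
Qed.

HB.instance Definition _ := GRing.isZmodClosed.Build E VZ VZ_zmod_closed.

Lemma a_VZ j : a j \in VZ.
Proof. by rewrite inE -[rvR R (a j)](rowK (fun j => rvR R (a j))) row_sub. Qed.

Lemma acoord_comb (c : 'I_m -> R) u k :
  rvR R u = \sum_j c j *: rvR R (a j) -> acoord k u = c k.
Proof.
rewrite /acoord => ->; have -> : \sum_j c j *: rvR R (a j) = \row_j c j *m A.
  by rewrite mulmx_sum_row; apply: eq_bigr => j _; rewrite mxE rowK.
by rewrite -mulmxA mulmxVp // mulmx1 mxE.
Qed.

Lemma acoord_a j k : acoord k (a j) = (j == k)%:R.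
Proof.
apply: (@acoord_comb (fun i => (j == i)%:R)); rewrite (bigD1 j) //= eqxx scale1r.
by rewrite big1 ?addr0 // => i; rewrite eq_sym => /negbTE ->; rewrite scale0r.
Qed.

Lemma inMP u : inM u <-> u \in VZ /\ forall k, 0 <= acoord k u.
Proof.
split=> [[c [c_ge0 uc]]|[uV u_ge0]].
  split=> [|k]; last by rewrite (acoord_comb _ uc).
  by rewrite inE uc summx_sub // => j _; apply/scalemx_sub/a_VZ.
exists (acoord^~ u); split=> //.
by rewrite -{1}(mulmxKpV uV) mulmx_sum_row; apply: eq_bigr => j _; rewrite rowK.
Qed.

Lemma inM_acoord_ge0 u k : inM u -> 0 <= acoord k u.
Proof. by case/inMP. Qed.

Lemma inMD u v : inM u -> inM v -> inM (u + v).
Proof.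
move=> /inMP[uV u_ge0] /inMP[vV v_ge0]; apply/inMP; split; first exact: rpredD.
by move=> k; rewrite acoordD addr_ge0 ?u_ge0 ?v_ge0.
Qed.

Lemma inM_a j : inM (a j).
Proof. by apply/inMP; split=> [|k]; rewrite ?a_VZ ?acoord_a ?ler0n. Qed.

Lemma inM_subr_a u j : inM u -> 1 <= acoord j u -> inM (u - a j).
Proof.
move=> /inMP[uV u_ge0] u_ge1; apply/inMP; split; first by rewrite rpredB ?a_VZ.
move=> k; rewrite acoordB acoord_a; case: eqP => [<-|_]; first by rewrite subr_ge0.
by rewrite subr0.
Qed.

Lemma acoord_add_a u j k : acoord k (u + a j) = acoord k u + (j == k)%:R.
Proof. by rewrite acoordD acoord_a. Qed.

Section Regularity.
Variables (a0 : E) (l : 'I_m -> nat) (l0 : nat).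
Hypotheses (l0_gt0 : (0 < l0)%N) (l_gt0 : forall j, (0 < l j)%N).
Hypotheses (a0E : a0 *+ l0 = \sum_(j < m) a j *+ l j) (l0E : l0 = (\sum_(j < m) l j)%N).
Local Notation L := (laurent R n).
Local Notation lam := (lam R).
Local Notation xmon := (xmon R).

Definition weight k : R := (l k)%:R / l0%:R.

Lemma l0_neq0 : l0%:R != 0 :> R.
Proof. by rewrite pnatr_eq0 -lt0n. Qed.

Lemma weight_gt0 k : 0 < weight k.
Proof. by rewrite divr_gt0 // ltr0n. Qed.

Lemma sum_weight : \sum_k weight k = 1.
Proof. by rewrite -mulr_suml -natr_sum -l0E divff // l0_neq0. Qed.

Lemma acoord_a0 k : acoord k a0 = weight k.
Proof.
have : acoord k a0 *+ l0 = (l k)%:R.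
  rewrite -acoordMn a0E acoord_sum (bigD1 k) //= big1 ?addr0 => [|j /negbTE jk].
    by rewrite acoordMn acoord_a eqxx /= mulr1n.
  by rewrite acoordMn acoord_a jk mul0rn.
by rewrite -[acoord k a0 *+ l0]mulr_natr /weight => <-; rewrite mulfK ?l0_neq0.
Qed.

Lemma acoord_add_a0 u k : acoord k (u + a0) = acoord k u + weight k.
Proof. by rewrite acoordD acoord_a0. Qed.

Lemma inM_a0 : inM a0.
Proof.
apply/inMP; split=> [|k]; last by rewrite acoord_a0 ltW ?weight_gt0.
have a0l : a0 *+ l0 \in VZ by rewrite a0E rpred_sum // => j _; rewrite rpredMn ?a_VZ.
rewrite inE; have -> : rvR R a0 = l0%:R^-1 *: rvR R (a0 *+ l0).
  by rewrite raddfMn -scaler_nat scalerA mulVf ?l0_neq0 ?scale1r.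
exact: scalemx_sub.
Qed.

Definition nsteps i u : nat := red_steps weight i (acoord^~ u).

Definition nf i u : E :=
  u - \sum_(k < m | (k < i)%N) a k *~ red_count weight (acoord^~ u) (nsteps i u) k
  + a0 *+ nsteps i u.

Definition Phi i u : L := lam ^+ nsteps i u *: xmon (nf i u).

Lemma acoord_nf i u k : acoord k (nf i u) = nf_coord weight i (acoord^~ u) k.
Proof.
rewrite /nf /nf_coord acoordD acoordB acoord_sum acoordMn acoord_a0 mulr_natl.
congr (_ - _ + _); case: ifPn => ki.
  rewrite (bigD1 k) //= acoordMz acoord_a eqxx big1 ?addr0 // => j /andP[_ jk].
  by rewrite acoordMz acoord_a (negbTE jk) mul0rz.
apply: big1 => j ji; rewrite acoordMz acoord_a.
by case: eqP ji => [->|_]; [rewrite (negbTE ki) | rewrite mul0rz].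
Qed.

Lemma inM_nf i u : inM u -> inM (nf i u).
Proof.
move=> /inMP[uV u_ge0]; apply/inMP; split=> [|k].
  apply: rpredD; last by apply: rpredMn; case/inMP: inM_a0.
  by apply: rpredB => //; apply: rpred_sum => j _; apply/rpredMz/a_VZ.
by rewrite acoord_nf; apply: nf_coord_ge0 => //; exact: weight_gt0.
Qed.

Lemma acoord_nf_lt1 i u k : (k < i)%N -> acoord k (nf i u) < 1.
Proof. by move=> ki; rewrite acoord_nf nf_coord_lt1. Qed.

Section Step.
Variables (i : nat) (u : E) (j : 'I_m).
Hypotheses (im : (i < m)%N) (ji : (j < i)%N) (uM : inM u).

Lemma nsteps_add_a : nsteps i (u + a j) = (nsteps i (u + a0)).+1.
Proof.
apply: (red_steps_shift weight_gt0 sum_weight (acoord_add_a u j) (acoord_add_a0 u)) => //.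
by move=> k; exact: inM_acoord_ge0.
Qed.

Lemma nf_add_a : nf i (u + a j) = nf i (u + a0).
Proof.
rewrite /nf nsteps_add_a; set S := nsteps i (u + a0).
set c := red_count weight (acoord^~ u) S.+1.
rewrite (eq_bigr (fun k => a k *~ c k + a k *~ (j == k)%:R)); last first.
  by move=> k _; rewrite (red_count_shift_unit weight (acoord_add_a u j)) mulrzDr.
rewrite [in RHS](eq_bigr (fun k => a k *~ c k)) => [|k _]; last first.
  by rewrite (red_count_shift_p (acoord_add_a0 u)).
rewrite big_split /=.
have -> : \sum_(k < m | (k < i)%N) a k *~ (j == k)%:R = a j.
  rewrite (bigD1 j) // eqxx mulr1z big1 /= ?addr0 // => k /andP[_ kj].
  by rewrite eq_sym (negbTE kj) mulr0z.
set T := \sum_(k < m | _) _.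
by rewrite mulrS [T + a j]addrC opprD [u + a j + _]addrA addrK addrA [u - T + a0]addrAC.
Qed.

Lemma Phi_add_a : Phi i (u + a j) = lam *: Phi i (u + a0).
Proof. by rewrite /Phi nf_add_a nsteps_add_a exprS scalerA. Qed.

End Step.

Lemma nf_steps0 i u : (i < m)%N -> inM u -> nsteps i u = 0%N -> nf i u = u.
Proof.
move=> im uM S0; rewrite /nf S0 mulr0n addr0 big1 ?subr0 // => k ki.
rewrite (red_count_steps0 weight_gt0 sum_weight im _ S0 ki) ?mulr0z //.
by move=> k'; exact: inM_acoord_ge0.
Qed.

Lemma Phi_steps0 i u : (i < m)%N -> inM u -> nsteps i u = 0%N -> Phi i u = xmon u.
Proof. by move=> im uM S0; rewrite /Phi nf_steps0 // S0 expr0 scale1r. Qed.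

Lemma Phi_normal i u : (i < m)%N -> inM u ->
  (forall k : 'I_m, (k < i)%N -> acoord k u < 1) -> Phi i u = xmon u.
Proof.
move=> im uM u_lt1; apply: Phi_steps0 => //.
by apply: (red_steps_eq0 weight_gt0 sum_weight) => // k; exact: inM_acoord_ge0.
Qed.

Lemma nsteps_gt0 i u : (i < m)%N -> inM u -> (0 < nsteps i u)%N ->
  exists2 k : 'I_m, (k < i)%N & 1 <= acoord k u.
Proof.
move=> im uM; apply: (red_steps_gt0 weight_gt0 sum_weight im) => k.
exact: inM_acoord_ge0.
Qed.

Lemma nsteps_ind (P : E -> Prop) i : (i < m)%N ->
  (forall u, inM u -> nsteps i u = 0%N -> P u) ->
  (forall v k, inM v -> (k < i)%N -> P (v + a0) -> P (v + a k)) ->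
  forall u, inM u -> P u.
Proof.
move=> im P0 Pstep u; move: {2}(nsteps i u) (leqnn (nsteps i u)) => N.
elim: N u => [|N IH] u uN uM.
  by apply: P0 => //; apply/eqP; rewrite -leqn0.
have [S0|/(nsteps_gt0 im uM)[k ki u_ge1]] := posnP (nsteps i u); first exact: P0.
have vM := inM_subr_a uM u_ge1; rewrite -(subrK (a k) u).
apply: Pstep => //; apply: IH; last exact: inMD vM inM_a0.
by move: uN; rewrite -{1}(subrK (a k) u) nsteps_add_a.
Qed.

Lemma Phi_shift i w u : (i < m)%N -> inM w -> inM u ->
  Phi i (u + w) = lam ^+ nsteps i u *: Phi i (nf i u + w).
Proof.
move=> im wM; move: u; apply: (nsteps_ind im) => [u uM S0|v k vM ki IH].
  by rewrite nf_steps0 // S0 expr0 scale1r.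
rewrite addrAC (Phi_add_a im ki (inMD vM wM)) addrAC IH.
by rewrite (nf_add_a im ki vM) (nsteps_add_a im ki vM) exprS scalerA.
Qed.

Local Notation S' := (@inS' R n m a).

Definition f j : L := xmon (a j) - lam *: xmon a0.

Definition inI i h := exists G : 'I_m -> L,
  (forall j, S' (G j)) /\ h = \sum_(j < m | (j < i)%N) lmul (G j) (f j).

Lemma lmul_xmon_f v j : lmul (xmon v) (f j) = xmon (v + a j) - lam *: xmon (v + a0).
Proof. by rewrite lmul_xmonl fgliftB fgliftZ !fgliftU. Qed.

Lemma inI0 i : inI i 0.
Proof.
exists (fun=> 0); split=> [j|]; first exact: supported0.
by rewrite big1 // => j _; rewrite lmul0l.
Qed.

Lemma inID i h1 h2 : inI i h1 -> inI i h2 -> inI i (h1 + h2).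
Proof.
case=> [G1 [G1S ->]] [G2 [G2S ->]]; exists (fun j => G1 j + G2 j); split.
  by move=> j; apply: supportedD; [exact: G1S | exact: G2S].
by rewrite -big_split; apply: eq_bigr => j _; rewrite lmulDl.
Qed.

Lemma inIZ i c h : inI i h -> inI i (c *: h).
Proof.
case=> [G [GS ->]]; exists (fun j => c *: G j); split.
  by move=> j; apply: supportedZ; exact: GS.
by rewrite scaler_sumr; apply: eq_bigr => j _; rewrite lmulZl.
Qed.

Lemma inI_fglift i (G : E -> L) (D : L) :
  (forall u, u \in dom D -> inI i (G u)) -> inI i (fglift G D).
Proof.
move=> GI; rewrite fgliftE big_seq; elim/big_ind: _ => [|h1 h2|u uD].
- exact: inI0.
- exact: inID.
- exact/inIZ/GI.
Qed.

Lemma inI_xmon_f i v j : inM v -> (j < i)%N -> inI i (lmul (xmon v) (f j)).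
Proof.
move=> vM ji; exists (fun k => if k == j then xmon v else 0); split.
  by move=> k; case: eqP => _; [exact: supportedU | exact: supported0].
rewrite (bigD1 j) //= eqxx big1 ?addr0 // => k /andP[_ /negbTE ->].
exact: lmul0l.
Qed.

Lemma xmon_sub_Phi_inI i u : (i < m)%N -> inM u -> inI i (xmon u - Phi i u).
Proof.
move=> im; move: u; apply: (nsteps_ind im) => [u uM S0|v k vM ki IH].
  by rewrite Phi_steps0 // subrr; exact: inI0.
rewrite (Phi_add_a im ki vM).
have -> : xmon (v + a k) - lam *: Phi i (v + a0)
    = lmul (xmon v) (f k) + lam *: (xmon (v + a0) - Phi i (v + a0)).
  by rewrite lmul_xmon_f scalerBr addrA subrK.
by apply: inID; [exact: inI_xmon_f | exact: inIZ].
Qed.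

Lemma Phi_lmul_xmon_f i u j :
  fglift (Phi i) (lmul (xmon u) (f j)) = Phi i (u + a j) - lam *: Phi i (u + a0).
Proof. by rewrite lmul_xmon_f fgliftB fgliftZ !fgliftU. Qed.

Lemma Phi_inI i h : (i < m)%N -> inI i h -> fglift (Phi i) h = 0.
Proof.
move=> im [G [GS ->]]; rewrite fglift_sum big1 // => j ji.
rewrite lmul_fgliftl fglift_comp fgliftE big1_seq // => u /andP[_ uG].
by rewrite Phi_lmul_xmon_f (Phi_add_a im ji (GS j u uG)) subrr scaler0.
Qed.

Lemma coeff_Phi_poly i u t : exists q, coeff t (Phi i u) = FracField.tofrac q.
Proof.
exists ('X^(nsteps i u) * (nf i u == t)%:R).
by rewrite coeffZ coeffU mul1r rmorphM rmorphXn rmorph_nat.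
Qed.

Lemma Phi_lmul_f (i : 'I_m) g : S' g -> fglift (Phi i) (lmul g (f i))
  = fglift (fun w => xmon (w + a i) - lam *: Phi i (w + a0)) (fglift (Phi i) g).
Proof.
move=> gS; rewrite lmul_fgliftl !fglift_comp; apply: eq_in_fglift => u ug.
have uM : inM u := gS u ug.
rewrite [Phi i u]/Phi fgliftZ fgliftU Phi_lmul_xmon_f.
rewrite (Phi_shift (ltn_ord i) (inM_a i) uM) (Phi_shift (ltn_ord i) inM_a0 uM).
rewrite (Phi_normal (ltn_ord i) (inMD (inM_nf i uM) (inM_a i))) => [|k ki].
  by rewrite scalerDr scalerN !scalerA [lam * _]mulrC.
have ik : (i == k) = false := gtn_eqF ki.
by rewrite acoord_add_a ik addr0 acoord_nf_lt1.
Qed.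

Lemma inI_lmul_f (i : 'I_m) g : S' g -> inI i (lmul g (f i)) -> inI i g.
Proof.
move=> gS gfI; have Phi_g0 : fglift (Phi i) g = 0.
  apply: (@fglift_sub_X_eq0 _ _ (+%R^~ (a i)) (fun w => Phi i (w + a0))).
  - exact: addIr.
  - by move=> w t; exact: coeff_Phi_poly.
  by move: (Phi_lmul_f i gS); rewrite (Phi_inI (ltn_ord i) gfI) => /esym.
have -> : g = fglift (fun u => xmon u - Phi i u) g.
  by rewrite fglift_funB Phi_g0 subr0 fglift_id.
by apply: inI_fglift => u ug; apply: xmon_sub_Phi_inI (ltn_ord i) (gS u ug).
Qed.

Lemma coeff0_lmul_f h j : S' h -> coeff 0 (lmul h (f j)) = 0.
Proof.
move=> hS; rewrite lmul_fgliftl coeff_fglift big1_seq // => u /andP[_ uh].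
have uM : inM u := hS u uh.
have nz v : 0 < acoord j v -> (v == 0) = false.
  by move=> v_gt0; apply/eqP => v0; move: v_gt0; rewrite v0 raddf0 ltxx.
have ujM : (u + a j == 0) = false.
  by apply: nz; rewrite acoord_add_a eqxx ltr_wpDl ?inM_acoord_ge0 ?ltr0n.
have u0M : (u + a0 == 0) = false.
  by apply: nz; rewrite acoord_add_a0 ltr_wpDl ?inM_acoord_ge0 ?weight_gt0.
by rewrite lmul_xmon_f coeffB coeffZ !coeffU !mul1r ujM u0M !mulr0n mulr0 subr0 mulr0.
Qed.

Lemma coeff0_inI i h : inI i h -> coeff 0 h = 0.
Proof. by case=> G [GS ->]; rewrite raddf_sum big1 // => j _; exact: coeff0_lmul_f. Qed.

Local Notation fs := [seq f j | j <- enum 'I_m].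

Lemma size_fs : size fs = m.
Proof. by rewrite size_map size_enum_ord. Qed.

Lemma nth_fs (j : 'I_m) : fs`_j = f j.
Proof. by rewrite (nth_map j) ?size_enum_ord // nth_ord_enum. Qed.

Lemma in_idealP i h : (i <= m)%N -> in_ideal S' (take i fs) h <-> inI i h.
Proof.
move=> im; have size_take : size (take i fs) = i by rewrite size_takel // size_fs.
have sum_take (F : nat -> L) :
    \sum_(j < size (take i fs)) F j = \sum_(j < m | (j < i)%N) F j.
  by rewrite size_take -(big_ord_widen _ F im).
split=> [[gs [size_gs [gsS ->]]]|[G [GS ->]]].
  exists (fun j => gs`_j); split=> [j|].
    have [/(mem_nth 0)/gsS //|/(nth_default 0) ->] := ltnP j (size gs).
    exact: supported0.
  rewrite (sum_take (fun t => lmul gs`_t (take i fs)`_t)).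
  by apply: eq_bigr => j ji; rewrite nth_take // nth_fs.
exists (take i [seq G j | j <- enum 'I_m]); split.
  by rewrite size_take size_takel // size_map size_enum_ord.
split=> [g /mem_take /mapP[j _ ->] //|].
rewrite (sum_take (fun t => lmul (take i [seq G j | j <- enum 'I_m])`_t (take i fs)`_t)).
apply: eq_bigr => j ji.
by rewrite !nth_take // nth_fs (nth_map j) ?size_enum_ord // nth_ord_enum.
Qed.

Lemma regular_f : regular_seq S' fs.
Proof.
split.
- move=> _ /mapP[j _ ->]; rewrite /f.
  exact: supportedB (supportedU (inM_a j)) (supportedZ (supportedU inM_a0)).
- move=> i; rewrite size_fs => im g gS /(in_idealP _ (ltnW im)) gfI.
  apply/(in_idealP _ (ltnW im)); rewrite (nth_fs (Ordinal im)) in gfI.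
  exact: (inI_lmul_f (i := Ordinal im)).
- rewrite -[X in in_ideal _ X](take_oversize (leqnn (size fs))) size_fs.
  move/(in_idealP _ (leqnn m))/coeff0_inI/eqP.
  by rewrite /lone /xmon coeffU mul1r eqxx oner_eq0.
Qed.

End Regularity.
End Coordinates.

Theorem proposition5p19 (R : realType) (n m : nat)
  (a : 'I_m -> 'rV[int]_n) (a0 : 'rV[int]_n) (l : 'I_m -> nat) (l0 : nat) :
  row_free (\matrix_(j < m) rvR R (a j)) ->
  (0 < l0)%N -> (forall j, 0 < l j)%N ->
  gcdn l0 (\big[gcdn/0%N]_(j < m) l j) = 1%N ->
  a0 *+ l0 = \sum_(j < m) a j *+ l j ->
  l0 = (\sum_(j < m) l j)%N ->
  regular_seq (@inS' R n m a)
    [seq xmon R (a j) - lam R *: xmon R a0 | j <- enum 'I_m].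
Proof.
move=> a_free l0_gt0 l_gt0 _ a0E l0E.
exact: (regular_f a_free l0_gt0 l_gt0 a0E l0E).
Qed.
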